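(* Let $(S,\mathsf d)$ be a complete separable metric space and $\mathbf p$ a Borel probability measure on $S$; let $\varepsilon>0$, $k\in\mathbb{N}$, and let $X_1,\dots,X_k$ be i.i.d. with law $\mathbf p$. Let $C_1,\dots,C_k$ be pairwise disjoint sets with $C_i\subset B(X_i,\varepsilon)$ and $\bigcup_iC_i=\bigcup_iB(X_i,\varepsilon)$, and set \[\mathbf p^{k,\varepsilon}:=\frac{1}{\sum_{i=1}^k\mathbf p(C_i)}\sum_{i=1}^k\mathbf p(C_i)\delta_{X_i}.\] Then $\mathbb E[\mathrm d_{BL}(\mathbf p,\mathbf p^{k,\varepsilon})]\le\varepsilon\,p_{\varepsilon,k}+2(1-p_{\varepsilon,k})$.
   Context: $B(x,\varepsilon)=\{y:\mathsf d(x,y)<\varepsilon\}$. $p_{\varepsilon,k}:=\mathbb P(X\in\bigcup_{i=1}^kB(X_i,\varepsilon))$ with $X,X_1,\dots,X_k$ i.i.d. with law $\mathbf p$. For bounded Lipschitz $\varphi$, $\|\varphi\|_{BL}:=\|\varphi\|_\infty+\mathrm{Lip}(\varphi)$, and $\mathrm d_{BL}(\mathbf p,\mathbf p'):=\sup\{|\int\varphi\,d\mathbf p-\int\varphi\,d\mathbf p'|:\|\varphi\|_{BL}\le1\}$. *)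

From HB Require Import structures.
From mathcomp Require Import all_boot all_order all_algebra.
From mathcomp Require Import all_classical all_reals all_analysis.
Set Implicit Arguments. Unset Strict Implicit. Unset Printing Implicit Defensive.
Import Order.TTheory GRing.Theory Num.Theory.
Local Open Scope classical_set_scope.
Local Open Scope ring_scope.

Section metric.
Context {R : realType} {S : Type}.
Variable d : S -> S -> R.

Definition is_metric : Prop :=
  (forall x y, d x y = 0 <-> x = y) /\
  (forall x y, d x y = d y x) /\
  (forall x y z, d x z <= d x y + d y z).

Definition dball (x : S) (e : R) : set S := [set y | d x y < e].

Definition d_open (A : set S) : Prop :=
  forall x, A x -> exists2 e : R, 0 < e & dball x e `<=` A.

Definition d_complete : Prop :=
  forall u : nat -> S,
    (forall e : R, 0 < e -> exists N : nat, forall m n, (N <= m)%N -> (N <= n)%N ->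
        d (u m) (u n) < e) ->
    exists l : S, forall e : R, 0 < e -> exists N : nat, forall n, (N <= n)%N ->
        d (u n) l < e.

Definition d_separable : Prop :=
  exists D : set S, countable D /\
    forall x (e : R), 0 < e -> exists2 y, D y & d x y < e.

Definition supnorm (phi : S -> R) : \bar R :=
  ereal_sup [set (`|phi x|)%:E | x in [set: S]].

Definition lipconst (phi : S -> R) : \bar R :=
  ereal_inf [set L%:E | L in [set L : R | 0 <= L /\
     forall x y, `|phi x - phi y| <= L * d x y]].

Definition BLnorm (phi : S -> R) : \bar R := (supnorm phi + lipconst phi)%E.

End metric.

Section dBL.
Context {dS : measure_display} {S : measurableType dS} {R : realType}.
Variable d : S -> S -> R.

Definition dBL (mu nu : set S -> \bar R) : \bar R :=
  ereal_sup [set `| (\int[mu]_x (phi x)%:E - \int[nu]_x (phi x)%:E)%E |%E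
            | phi in [set phi : S -> R | (BLnorm d phi <= 1)%E]].

(* the empirical-type measure
   p^{k,eps} = (1 / sum_i p(C_i)) sum_i p(C_i) delta_{X_i},
   given the points xs and the cells C (all p(C_i) are finite) *)
Definition pke (p : set S -> \bar R) (k : nat) (xs : 'I_k -> S)
    (C : 'I_k -> set S) : set S -> \bar R :=
  fun A => (\sum_(i < k)
     (fine (p (C i)) / \sum_(j < k) fine (p (C j)))%:E * \d_(xs i) A)%E.

End dBL.

Definition mutual_indep {dO dS : measure_display} {O : measurableType dO}
    {S : measurableType dS} {R : realType} {I : finType}
    (P : probability O R) (Y : I -> O -> S) : Prop :=
  forall A : I -> set S, (forall i, measurable (A i)) ->
    P (\bigcap_(i in [set: I]) (Y i @^-1` A i)) =
    (\prod_(i : I) P (Y i @^-1` A i))%E.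

Definition extfam {O S : Type} {k : nat} (X0 : O -> S) (X : 'I_k -> O -> S)
    : option 'I_k -> O -> S :=
  fun o => match o with None => X0 | Some i => X i end.

(* Fix the sample and a test function phi with ||phi||_BL <= 1, and let
   Z = sum_i p(C_i) = p(U_i B(X_i, eps)).  With g = sum_i phi(X_i) 1_{C_i},
     int phi dp - int phi dp^{k,eps} = int (phi - g) dp + (s - s / Z),
   where s = sum_i phi(X_i) p(C_i).  As phi is 1-Lipschitz and bounded by 1,
   |phi - g| <= eps on the cells and <= 1 off them, so the first term is at
   most eps Z + (1 - Z); since |s| <= Z, the second is at most 1 - Z.  Hence
   d_BL(p, p^{k,eps}) <= eps Z + 2 (1 - Z), which is affine in Z, and
   E[Z] = P(X in U_i B(X_i, eps)) = p_{eps,k} by Fubini, X being independent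
   of (X_1, ..., X_k).  Separability writes {(w, x) | d(X_i w, x) < eps} as a
   countable union of rectangles, which makes this set measurable for the
   product of sigma(X_1, ..., X_k) with the Borel sets. *)

From HB Require Import structures.
From mathcomp Require Import all_boot all_order all_algebra.
From mathcomp Require Import all_classical all_reals all_analysis.
From mathcomp Require Import measurable_realfun ring lra.
Import Order.TTheory GRing.Theory Num.Theory.
Local Open Scope classical_set_scope.
Local Open Scope ring_scope.
Set Implicit Arguments. Unset Strict Implicit.

Lemma big_option (R : Type) (idx : R) (op : Monoid.com_law idx) (I : finType)
    (F : option I -> R) :
  \big[op/idx]_(o : option I) F o = op (F None) (\big[op/idx]_(i : I) F (Some i)).
Proof.
rewrite (bigD1 None) //=; congr (op _ _).
rewrite (reindex_omap Some id) /=; last by case.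
by apply: eq_bigl => i /=; rewrite eqxx.
Qed.

Lemma bigcup_setT_bigsetU (I : finType) T (F : I -> set T) :
  \bigcup_(i in [set: I]) F i = \big[setU/set0]_(i : I) F i.
Proof.
apply/seteqP; split => x.
- by case=> i _ Fx; rewrite (bigD1 i) //=; left.
- elim/big_rec: _ => // i A _ IH [Fx|Ax]; [by exists i|exact: IH].
Qed.

(* No measurability is needed: for nonnegative functions the integral is a
   supremum over the simple functions below them. *)
Lemma ge0_le_integral_nonmeasurable d (T : measurableType d) (R : realType)
    (mu : {measure set T -> \bar R}) (f g : T -> \bar R) :
  (forall x, 0 <= f x)%E -> (forall x, f x <= g x)%E ->
  (\int[mu]_x f x <= \int[mu]_x g x)%E.
Proof.
move=> f0 fg; have g0 x : (0 <= g x)%E by apply: le_trans (fg x).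
have posE (h : T -> \bar R) : (forall x, 0 <= h x)%E -> (h^\+ = h /\ h^\- = cst 0)%E.
  move=> h0; split; apply/funext => x.
    by apply: (@ge0_funeposE _ _ setT) => //; rewrite in_setT.
  by apply: (@ge0_funenegE _ _ setT) => //; rewrite in_setT.
rewrite /integral !patch_setT; have [-> ->] := posE _ f0; have [-> ->] := posE _ g0.
apply: leeB => //; apply: ereal_sup_le => _ [h hf <-]; exists h => //= x.
exact: le_trans (hf x) (fg x).
Qed.

Lemma bounded_integrable d (T : measurableType d) (R : realType)
    (mu : {finite_measure set T -> \bar R}) (f : T -> R) (M : R) :
  measurable_fun setT f -> (forall x, `|f x| <= M) ->
  mu.-integrable setT (EFin \o f).
Proof.
move=> mf fM; apply: measurable_bounded_integrable => //.
  exact: fin_num_fun_lty.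
exists M; split => [|r Mr x _]; first exact: num_real.
exact: le_trans (fM x) (ltW Mr).
Qed.

Lemma integral_affine_probability d (T : measurableType d) (R : realType)
    (P : probability T R) (f : T -> R) (a b : R) :
  P.-integrable setT (EFin \o f) ->
  (\int[P]_x (a * f x + b)%:E = a%:E * \int[P]_x (f x)%:E + b%:E)%E.
Proof.
move=> f_int.
have PT : (P : {measure set T -> \bar R}) setT = 1%E by exact: probability_setT.
under eq_integral do rewrite EFinD EFinM.
rewrite integralD //; first last.
- exact: finite_measure_integrable_cst.
- exact: integrableZl.
by rewrite integralZl // integral_cst // PT mule1.
Qed.

Section metric_space.
Context (R : realType) (S : Type) (d : S -> S -> R).
Hypothesis d_metric : is_metric d.

Lemma metric_ge0 x y : 0 <= d x y.
Proof.
have [d0 [dC dtri]] := d_metric.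
by have := dtri x y x; rewrite (proj2 (d0 x x)) // (dC y x); lra.
Qed.

Lemma lipconst_ge0 (phi : S -> R) : (0 <= lipconst d phi)%E.
Proof. by apply: le_ereal_inf_tmp => _ [L [L0 _] <-]; rewrite lee_fin. Qed.

Lemma supnorm_ge_norm (phi : S -> R) x : (`|phi x|%:E <= supnorm phi)%E.
Proof. by apply: ereal_sup_ubound; exists x. Qed.

Lemma BLnorm_le1_bounded (phi : S -> R) x : (BLnorm d phi <= 1)%E -> `|phi x| <= 1.
Proof.
move=> phi1; rewrite -lee_fin; apply: le_trans (supnorm_ge_norm phi x) _.
by apply: le_trans phi1; rewrite /BLnorm leeDl // lipconst_ge0.
Qed.

Lemma BLnorm_le1_lipschitz (phi : S -> R) x y :
  (BLnorm d phi <= 1)%E -> `|phi x - phi y| <= d x y.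
Proof.
move=> phi1; have lip1 : (lipconst d phi <= 1)%E.
  apply: le_trans phi1; rewrite /BLnorm leeDr //.
  by apply: le_trans (supnorm_ge_norm phi x); rewrite lee_fin.
have dxy0 := metric_ge0 x y.
apply/ler_addgt0Pr => e e0; pose t := e / (d x y + 1).
have t0 : 0 < t by rewrite divr_gt0 // ltr_wpDl.
have te : t * (d x y + 1) = e by rewrite /t mulfVK // gt_eqF // ltr_wpDl.
have : (lipconst d phi < (1 + t)%:E)%E.
  by apply: le_lt_trans lip1 _; rewrite lte_fin ltrDl.
case/ereal_inf_lt => _ [L [L0 HL] <-]; rewrite lte_fin => Llt.
by apply: le_trans (HL x y) _; nra.
Qed.

End metric_space.

Section borel_metric_space.
Context (R : realType) (dS : measure_display) (S : measurableType dS).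
Context (d : S -> S -> R).
Hypothesis d_metric : is_metric d.
Hypothesis d_borel : (@measurable _ S) = <<s d_open d >>.

Lemma dball_measurable x e : measurable (dball d x e).
Proof.
rewrite d_borel; apply: sub_sigma_algebra => y /= dxy.
exists (e - d x y); first by rewrite subr_gt0.
move=> z; rewrite /dball /= => dyz.
by have [_ [_ dtri]] := d_metric; have := dtri x y z; lra.
Qed.

Lemma lipschitz_measurable (phi : S -> R) :
  (forall x y, `|phi x - phi y| <= d x y) -> measurable_fun setT phi.
Proof.
move=> phi_lip.
apply: (measurability _ (RGenOInfty.measurableE R)).
move=> _ [_ [a ->] <-]; rewrite setTI d_borel.
apply: sub_sigma_algebra => y /=; rewrite in_itv /= andbT => ay.
exists (phi y - a); first by rewrite subr_gt0.
move=> z; rewrite /dball /= in_itv /= andbT => dyz.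
by have := ler_distlDr (phi_lip y z); lra.
Qed.

End borel_metric_space.

Lemma dBL_ge0 dS (S : measurableType dS) (R : realType) (d : S -> S -> R)
  (mu nu : set S -> \bar R) : (0 <= dBL d mu nu)%E.
Proof.
apply: le_trans (abse_ge0 (\int[mu]_x (0:R)%:E - \int[nu]_x (0:R)%:E)%E) _.
apply: ereal_sup_ubound; exists (fun=> 0) => //.
rewrite /BLnorm -[1%E]add0e; apply: leeD.
- by apply: ge_ereal_sup => _ [x _ <-]; rewrite normr0.
- apply: (@le_trans _ _ 0%:E); last exact: lee01.
  apply: ereal_inf_lbound; exists 0 => //.
  by split => // x y; rewrite subrr normr0 mul0r.
Qed.

Section pke_integral.
Context (R : realType) (dS : measure_display) (S : measurableType dS).
Variables (p : {measure set S -> \bar R}) (k : nat).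
Variables (xs : 'I_k -> S) (Cs : 'I_k -> set S).

Local Notation weight i := (fine (p (Cs i)) / \sum_(j < k) fine (p (Cs j))).

Lemma pke_weight_ge0 i : 0 <= weight i.
Proof. by rewrite divr_ge0 ?sumr_ge0 // => *; apply: fine_ge0. Qed.

Let weighted_dirac (n : nat) : {measure set S -> \bar R} :=
  if insub n is Some i then mscale (NngNum (pke_weight_ge0 i)) \d_(xs i)
  else mzero.

Let pke_msum : pke p xs Cs = msum weighted_dirac k.
Proof.
by apply/funext => A; apply: eq_bigr => i _; rewrite /weighted_dirac valK.
Qed.

Let ge0_integral_weighted_dirac (F : S -> \bar R) :
  measurable_fun setT F -> (forall x, 0 <= F x)%E ->
  (\int[msum weighted_dirac k]_x F x = \sum_(i < k) (weight i)%:E * F (xs i))%E.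
Proof.
move=> mF F0; rewrite ge0_integral_measure_sum //.
apply: eq_bigr => i _; rewrite /weighted_dirac valK ge0_integral_mscale //=.
by rewrite integral_dirac // diracT mul1e.
Qed.

Lemma integral_pke (phi : S -> R) : measurable_fun setT phi ->
  (\int[pke p xs Cs]_x (phi x)%:E = (\sum_(i < k) weight i * phi (xs i))%:E)%E.
Proof.
move=> mphi; have mphiE : measurable_fun setT (EFin \o phi) by exact/measurable_EFinP.
rewrite pke_msum integralE !ge0_integral_weighted_dirac //; last 2 first.
- exact: measurable_funeneg.
- exact: measurable_funepos.
rewrite funerpos funerneg /=; under eq_bigr do rewrite -EFinM.
under [X in (_ - X)%E]eq_bigr do rewrite -EFinM.
rewrite !sumEFin -EFinB -sumrB; congr EFin.
by apply: eq_bigr => i _; rewrite -mulrBr -[in RHS](funrposBneg phi).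
Qed.

End pke_integral.

(* Includes [z = 0], where [s / 0 = 0]: this is the case of an empty union of
   balls, in which [pke] is the zero measure. *)
Lemma normrB_divr_le (R : realFieldType) (z s : R) :
  0 <= z <= 1 -> `|s| <= z -> `|s - s / z| <= 1 - z.
Proof.
move=> /andP[z0 z1] sz; have [z_eq0|zneq0] := eqVneq z 0.
  by move: sz; rewrite z_eq0 normr_le0 => /eqP ->; rewrite mul0r subrr normr0 subr0.
have zgt0 : 0 < z by rewrite lt_def zneq0.
rewrite (_ : s - s / z = s * (z - 1) / z); last by field.
rewrite normrM normfV (ger0_norm z0) normrM (ler0_norm (x := z - 1)) ?subr_le0 //.
by rewrite ler_pdivrMr //; have := normr_ge0 s; nra.
Qed.

Definition cellsum (R : realType) (T : Type) (k : nat) (Cs : 'I_k -> set T)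
    (a : 'I_k -> R) (y : T) : R :=
  \sum_(i < k) a i * \1_(Cs i) y.

Section cell_sums.
Context (R : realType) (T : Type) (k : nat) (Cs : 'I_k -> set T).
Hypothesis Cs_disj : forall i j, i != j -> Cs i `&` Cs j = set0.

Lemma cellsum_in_cell (a : 'I_k -> R) i y : Cs i y -> cellsum Cs a y = a i.
Proof.
move=> Ciy; rewrite /cellsum (bigD1 i) //= indicE mem_set // mulr1 big1 ?addr0 // => j ji.
rewrite indicE memNset ?mulr0 // => Cjy.
by have := Cs_disj ji; rewrite -subset0 => /(_ y (conj Cjy Ciy)).
Qed.

Lemma cellsum_out_cells (a : 'I_k -> R) y : ~ (exists i, Cs i y) -> cellsum Cs a y = 0.
Proof.
move=> nCy; rewrite /cellsum big1 // => j _.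
by rewrite indicE memNset ?mulr0 // => Cjy; apply: nCy; exists j.
Qed.

Lemma normr_cellsum_le (a : 'I_k -> R) (M : R) y :
  0 <= M -> (forall i, `|a i| <= M) -> `|cellsum Cs a y| <= M.
Proof.
move=> M0 aM; have [[i Ciy]|nCy] := pselect (exists i, Cs i y).
  by rewrite (cellsum_in_cell _ Ciy).
by rewrite cellsum_out_cells // normr0.
Qed.

End cell_sums.

Section cell_sum_integral.
Context (R : realType) (d : measure_display) (T : measurableType d).
Variables (mu : {finite_measure set T -> \bar R}) (k : nat) (Cs : 'I_k -> set T).
Hypothesis Cs_measurable : forall i, measurable (Cs i).

Lemma measurable_cellsum (a : 'I_k -> R) : measurable_fun setT (cellsum Cs a).
Proof. by apply: measurable_sum => i; apply: measurable_funM. Qed.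

Lemma Rintegral_cellsum (a : 'I_k -> R) :
  \int[mu]_y cellsum Cs a y = \sum_(i < k) a i * fine (mu (Cs i)).
Proof.
have indicator_bound (A : set T) y : `|\1_A y : R| <= 1.
  by rewrite indicE; case: (_ \in _); rewrite ?normr1 ?normr0.
have indic_int i : mu.-integrable setT (EFin \o \1_(Cs i)).
  by apply: (@bounded_integrable _ _ _ mu _ 1) => //; exact: measurable_indic.
have term_int i : mu.-integrable setT (EFin \o (fun y => a i * \1_(Cs i) y)).
  apply: (@bounded_integrable _ _ _ mu _ `|a i|) => [|y]; first exact: measurable_funM.
  by rewrite normrM ler_piMr.
rewrite /Rintegral /cellsum; under eq_integral do rewrite -sumEFin.
rewrite integral_sum //.
transitivity (fine (\sum_(i < k) (a i * fine (mu (Cs i)))%:E)); last by rewrite sumEFin.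
congr fine; apply: eq_bigr => i _; under eq_integral do rewrite EFinM.
rewrite (integralZl _ (indic_int i)) // integral_indic // setIT.
by rewrite EFinM fineK ?fin_num_measure.
Qed.

End cell_sum_integral.

Section dBL_pke.
Context (R : realType) (dS : measure_display) (S : measurableType dS).
Context (d : S -> S -> R).
Hypothesis d_metric : is_metric d.
Hypothesis d_borel : (@measurable _ S) = <<s d_open d >>.
Variables (p : probability S R) (eps : R) (k : nat).
Variables (xs : 'I_k -> S) (Cs : 'I_k -> set S).
Hypothesis Cs_measurable : forall i, measurable (Cs i).
Hypothesis Cs_disj : forall i j, i != j -> Cs i `&` Cs j = set0.
Hypothesis Cs_ball : forall i, Cs i `<=` dball d (xs i) eps.

Local Notation mass := (\sum_(i < k) fine (p (Cs i))).

Lemma cells_mass : mass%:E = p (\big[setU/set0]_(i < k) Cs i).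
Proof.
rewrite measure_bigsetU_ord //; last by apply/trivIsetP => i j _ _; exact: Cs_disj.
by rewrite -sumEFin; apply: eq_bigr => i _; rewrite fineK ?fin_num_measure.
Qed.

Lemma cells_mass_ge0_le1 : 0 <= mass <= 1.
Proof.
rewrite -!lee_fin cells_mass measure_ge0 /=.
by apply: probability_le1; exact: bigsetU_measurable.
Qed.

Section BL_function.
Variable phi : S -> R.
Hypothesis phi_BL : (BLnorm d phi <= 1)%E.

Let g := cellsum Cs (fun i => phi (xs i)).
Let h := cellsum Cs (fun=> eps - 1).

Let phi_measurable : measurable_fun setT phi.
Proof.
exact: (lipschitz_measurable d_borel
  (fun x y => BLnorm_le1_lipschitz d_metric x y phi_BL)).
Qed.

Let phi_integrable : p.-integrable setT (EFin \o phi).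
Proof.
by apply: (@bounded_integrable _ _ _ p _ 1) => // y; exact: BLnorm_le1_bounded phi_BL.
Qed.

Let g_integrable : p.-integrable setT (EFin \o g).
Proof.
apply: (@bounded_integrable _ _ _ p _ 1); first exact: measurable_cellsum.
by move=> y; apply: normr_cellsum_le => // i; exact: BLnorm_le1_bounded phi_BL.
Qed.

Let h_integrable : p.-integrable setT (EFin \o h).
Proof.
apply: (@bounded_integrable _ _ _ p _ `|eps - 1|); first exact: measurable_cellsum.
by move=> y; exact: normr_cellsum_le.
Qed.

(* On the cell [Cs i], [phi] is within [eps] of [phi (xs i)]; off the cells,
   [|phi| <= 1]. *)
Let phi_sub_g_le y : `|phi y - g y| <= 1 + h y.
Proof.
have [[i Ciy]|nCy] := pselect (exists i, Cs i y).
  rewrite /g /h !(cellsum_in_cell Cs_disj _ Ciy) distrC.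
  have := Cs_ball Ciy; have := BLnorm_le1_lipschitz d_metric (xs i) y phi_BL.
  by rewrite /dball /=; lra.
rewrite /g /h !cellsum_out_cells // subr0 addr0.
exact: BLnorm_le1_bounded phi_BL.
Qed.

Let normr_Rintegral_sub_g_le : `|\int[p]_y (phi y - g y)| <= 1 + (eps - 1) * mass.
Proof.
have phi_g_int : p.-integrable setT (EFin \o (fun y => phi y - g y)).
  exact: (integrableB measurableT phi_integrable g_integrable).
apply: le_trans (le_normr_Rintegral measurableT phi_g_int) _.
have one_h_int : p.-integrable setT (EFin \o (fun y => 1 + h y)).
  have := integrableD measurableT
    (finite_measure_integrable_cst p 1 measurableT) h_integrable.
  by apply: eq_integrable => // y _ /=; rewrite EFinD.
apply: le_trans (le_Rintegral measurableT (integrable_norm phi_g_int) one_h_int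
  (fun y _ => phi_sub_g_le y)) _.
rewrite RintegralD //; last exact: finite_measure_integrable_cst.
rewrite Rintegral_cst //.
have -> : fine (p setT) = 1 by have /= -> := probability_setT p.
by rewrite mul1r Rintegral_cellsum // big_distrr.
Qed.

Lemma normr_integral_sub_pke_le :
  (`|\int[p]_x (phi x)%:E - \int[pke p xs Cs]_x (phi x)%:E|
     <= (eps * mass + 2 * (1 - mass))%:E)%E.
Proof.
pose s := \sum_(i < k) phi (xs i) * fine (p (Cs i)).
have phiE : (\int[p]_x (phi x)%:E = (\int[p]_y (phi y - g y) + s)%:E)%E.
  rewrite RintegralB // Rintegral_cellsum // subrK.
  by rewrite /Rintegral fineK // integrable_fin_num.
have pkeE : \sum_(i < k) fine (p (Cs i)) / mass * phi (xs i) = s / mass.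
  by rewrite /s big_distrl; apply: eq_bigr => i _; rewrite /= mulrAC (mulrC (phi _)).
have s_le : `|s| <= mass.
  apply: le_trans (ler_norm_sum _ _ _) _; apply: ler_sum => j _.
  by rewrite normrM (ger0_norm (fine_ge0 (measure_ge0 _ _))) ler_piMl
    ?fine_ge0 ?measure_ge0 ?(BLnorm_le1_bounded _ phi_BL).
rewrite phiE integral_pke // pkeE -EFinB abse_EFin lee_fin -addrA.
apply: le_trans (ler_normD _ _) _.
have := normrB_divr_le cells_mass_ge0_le1 s_le.
have := normr_Rintegral_sub_g_le; lra.
Qed.

End BL_function.

Lemma dBL_pke_le : (dBL d p (pke p xs Cs) <= (eps * mass + 2 * (1 - mass))%:E)%E.
Proof. by apply: ge_ereal_sup => _ [phi phi_BL <-]; exact: normr_integral_sub_pke_le. Qed.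

End dBL_pke.

Definition rectangles (T1 : Type) dS (S : measurableType dS) (G : set (set T1)) :
    set (set (T1 * S)) :=
  [set E | exists B A, [/\ G B, measurable A & E = B `*` A]].
Arguments rectangles {T1 dS} S G.

Section graph_law.
Context (R : realType) (dO dS : measure_display).
Context (O : measurableType dO) (S : measurableType dS).
Variables (P : probability O R) (p : probability S R) (Y : O -> S).
Hypothesis Y_measurable : measurable_fun setT Y.
Variable G : set (set O).
Hypothesis G_measurable : G `<=` measurable.
Hypothesis G_setI : setI_closed G.
Hypothesis G_setT : G setT.
Hypothesis Y_indep :
  forall B A, G B -> measurable A -> P (B `&` Y @^-1` A) = (P B * p A)%E.

Lemma rectangles_measurable : rectangles S G `<=` measurable.
Proof.
by move=> _ [B [A [GB mA ->]]]; apply: measurableX => //; exact: G_measurable.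
Qed.

Lemma sigma_rectangles_measurable :
  <<s rectangles S G >> `<=` measurable.
Proof. exact: smallest_sub (@sigma_algebra_measurable _ _) rectangles_measurable. Qed.

Let rectangles_setI : setI_closed (rectangles S G).
Proof.
move=> _ _ [B1 [A1 [GB1 mA1 ->]]] [B2 [A2 [GB2 mA2 ->]]].
exists (B1 `&` B2), (A1 `&` A2).
by split; [exact: G_setI|exact: measurableI|rewrite setXI].
Qed.

Let graph_measurable : measurable_fun setT (fun w => (w, Y w)).
Proof. by apply: measurable_fun_pair => //; exact: measurable_id. Qed.

(* The measure instance of [pushforward] depends on a measurability proof. *)
Let graph_law : {measure set (O * S) -> \bar R}.
Proof. refine (pushforward P (fun w => (w, Y w))); exact: graph_measurable. Defined.

(* The law of [w |-> (w, Y w)] and [P \x p] agree on the pi-system of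
   rectangles by independence, hence on the sigma-algebra it generates. *)
Lemma graph_law_product E :
  <<s rectangles S G >> E -> P [set w | E (w, Y w)] = (P \x p)%E E.
Proof.
have rect_setT : rectangles S G setT by exists setT, setT; rewrite setXTT.
have setT_cover : \bigcup_(n : nat) [set: O * S] = setT.
  by apply/seteqP; split => // z _; exists 0%N.
have law_rect : forall E, rectangles S G E -> graph_law E = (P \x p)%E E.
  move=> _ [B [A [GB mA ->]]]; rewrite /= product_measure1E //; last exact: G_measurable.
  exact: Y_indep.
have law_fin (n : nat) : (graph_law setT < +oo)%E.
  by rewrite /= /pushforward preimage_setT probability_setT ltry.
move=> E_sigma.
exact: (g_sigma_algebra_measure_unique _ rectangles_measurable
  (fun=> setT) (fun=> rect_setT)
  setT_cover graph_law (P \x p)%E rectangles_setI law_rect law_fin _ E_sigma).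
Qed.

End graph_law.

Lemma separable_dense_seq (R : realType) (S : pointedType) (d : S -> S -> R) :
  d_separable d -> exists g : nat -> S, forall x e, 0 < e -> exists m, d x (g m) < e.
Proof.
move=> [D [D_countable D_dense]]; have /pcard_surjP[g g_surj] := D_countable.
exists g => x e e0; have [y Dy dxy] := D_dense x e e0.
by have [m _ gm] := g_surj y Dy; exists m; rewrite gm.
Qed.

Section dist_lt_rectangles.
Context (R : realType) (dO dS : measure_display).
Context (O : measurableType dO) (S : measurableType dS) (d : S -> S -> R).
Hypothesis d_metric : is_metric d.
Hypothesis d_borel : (@measurable _ S) = <<s d_open d >>.
Variable g : nat -> S.
Hypothesis g_dense : forall x e, 0 < e -> exists m, d x (g m) < e.
Variables (G : set (set O)) (Z : O -> S).
Hypothesis G_ball : forall c r, G (Z @^-1` dball d c r).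

Let rect (m n : nat) (r : R) : set (O * S) :=
  (Z @^-1` dball d (g m) (r - n.+1%:R^-1)) `*` dball d (g m) n.+1%:R^-1.

Let dist_lt_bigcup r :
  [set z : O * S | d (Z z.1) z.2 < r] = \bigcup_m \bigcup_n rect m n r.
Proof.
have [_ [d_sym d_tri]] := d_metric.
apply/seteqP; split => [[w x] /= dlt|[w x] [m _ [n _ [/= Zw_near x_near]]]].
- have gap_gt0 : 0 < (r - d (Z w) x) / 2 by rewrite divr_gt0 // subr_gt0.
  have [N _ /(_ N (leqnn N)) /= N_lt] := near_infty_natSinv_lt (PosNum gap_gt0).
  have [m gm_near] : exists m, d x (g m) < N.+1%:R^-1.
    by apply: g_dense; rewrite invr_gt0 ltr0n.
  exists m => //; exists N => //; split; rewrite /dball /= d_sym //.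
  move: N_lt gm_near; set t := N.+1%:R^-1.
  by have := d_tri (Z w) x (g m); lra.
- move: Zw_near x_near; rewrite /dball /=; set t := n.+1%:R^-1.
  by have := d_tri (Z w) (g m) x; rewrite (d_sym (Z w) (g m)); lra.
Qed.

Lemma dist_lt_sigma_rectangles r :
  <<s rectangles S G >> [set z : O * S | d (Z z.1) z.2 < r].
Proof.
suff : measurable ([set z | d (Z z.1) z.2 < r]
  : set (g_sigma_algebraType (rectangles S G))) by [].
rewrite dist_lt_bigcup; apply: bigcupT_measurable => m; apply: bigcupT_measurable => n.
apply: sub_sigma_algebra; exists (Z @^-1` dball d (g m) (r - n.+1%:R^-1)).
by exists (dball d (g m) n.+1%:R^-1); split => //; exact: dball_measurable.
Qed.

End dist_lt_rectangles.

Section mutual_indep_extfam.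
Context (R : realType) (dO dS : measure_display).
Context (O : measurableType dO) (S : measurableType dS).
Variables (P : probability O R) (k : nat) (X0 : O -> S) (X : 'I_k -> O -> S).
Hypothesis X_indep : mutual_indep P (extfam X0 X).

Let bigcap_extfam (F : 'I_k -> set S) (A : set S) :
  \bigcap_(o in [set: option 'I_k]) extfam X0 X o @^-1` (if o is Some i then F i else A)
  = (\bigcap_(i in [set: 'I_k]) X i @^-1` F i) `&` X0 @^-1` A.
Proof.
apply/seteqP; split => [w XFw|w [XFw X0w] [i|] _ //]; last exact: XFw.
by split => [i _|]; [exact: (XFw (Some i))|exact: (XFw None)].
Qed.

Lemma mutual_indep_extfam (F : 'I_k -> set S) (A : set S) :
  (forall i, measurable (F i)) -> measurable A ->
  let B := \bigcap_(i in [set: 'I_k]) X i @^-1` F i in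
  P (B `&` X0 @^-1` A) = (P B * P (X0 @^-1` A))%E.
Proof.
move=> mF mA B; have mFA (A' : set S) : measurable A' ->
    forall o, measurable (if o is Some i then F i else A') by move=> mA' [].
have := X_indep (mFA A mA); have := X_indep (mFA setT measurableT).
rewrite !bigcap_extfam !big_option /= preimage_setT setIT probability_setT mul1e.
by move=> <- ->; rewrite muleC.
Qed.

End mutual_indep_extfam.

Section union_balls.
Context (R : realType) (dO dS : measure_display).
Context (O : measurableType dO) (S : measurableType dS) (d : S -> S -> R).
Hypothesis d_metric : is_metric d.
Hypothesis d_borel : (@measurable _ S) = <<s d_open d >>.
Hypothesis d_sep : d_separable d.
Variables (P : probability O R) (p : probability S R) (eps : R) (k : nat).
Variables (X0 : O -> S) (X : 'I_k -> O -> S).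
Hypothesis X0_measurable : measurable_fun setT X0.
Hypothesis X_measurable : forall i, measurable_fun setT (X i).
Hypothesis X_indep : mutual_indep P (extfam X0 X).
Hypothesis X0_law : forall A, measurable A -> P (X0 @^-1` A) = p A.

Let U w := \bigcup_(i in [set: 'I_k]) dball d (X i w) eps.

Let U_measurable w : measurable (U w).
Proof.
by apply: fin_bigcup_measurable => [|i _]; [exact: finite_finset|exact: dball_measurable].
Qed.

Let G : set (set O) := [set B | exists2 F : 'I_k -> set S,
  forall i, measurable (F i) & B = \bigcap_(i in [set: 'I_k]) X i @^-1` F i].

Let G_measurable : G `<=` measurable.
Proof.
move=> _ [F mF ->]; apply: fin_bigcap_measurable => [|i _]; first exact: finite_finset.
by rewrite -[X in measurable X]setTI; exact: X_measurable.
Qed.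

Let G_setI : setI_closed G.
Proof.
move=> _ _ [F1 mF1 ->] [F2 mF2 ->]; exists (fun i => F1 i `&` F2 i).
  by move=> i; exact: measurableI.
by rewrite -bigcapI; apply: eq_bigcapr => i _; rewrite preimage_setI.
Qed.

Let G_setT : G setT.
Proof. by exists (fun=> setT) => //; apply/seteqP; split. Qed.

Let G_ball i c r : G (X i @^-1` dball d c r).
Proof.
exists (fun j => if j == i then dball d c r else setT).
  by move=> j; case: ifP => _ //; exact: dball_measurable.
apply/seteqP; split => [w Xiw j _|w /(_ i I)]; last by rewrite eqxx.
by case: ifP => // /eqP ->.
Qed.

Let X0_indep B A : G B -> measurable A -> P (B `&` X0 @^-1` A) = (P B * p A)%E.
Proof. by move=> [F mF ->] mA; rewrite mutual_indep_extfam // X0_law. Qed.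

Let near_pairs : set (O * S) :=
  \bigcup_(i in [set: 'I_k]) [set z | d (X i z.1) z.2 < eps].

Let near_pairs_sigma : <<s rectangles S G >> near_pairs.
Proof.
have [g g_dense] := separable_dense_seq d_sep.
suff : measurable (near_pairs : set (g_sigma_algebraType (rectangles S G))) by [].
apply: fin_bigcup_measurable => [|i _]; first exact: finite_finset.
exact: (dist_lt_sigma_rectangles d_metric d_borel g_dense (G_ball i)).
Qed.

Let xsection_near_pairs w : xsection near_pairs w = U w.
Proof. by apply/seteqP; split => x; rewrite /xsection /= in_setE. Qed.

Let measurable_measure_union_balls : measurable_fun setT (fun w => p (U w)).
Proof.
have := measurable_fun_xsection p
  (sigma_rectangles_measurable G_measurable near_pairs_sigma).
by congr measurable_fun; apply/funext => w /=; rewrite xsection_near_pairs.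
Qed.

Lemma integral_measure_union_balls :
  (\int[P]_w p (U w) = P [set w | exists i, dball d (X i w) eps (X0 w)])%E.
Proof.
have -> : [set w | exists i, dball d (X i w) eps (X0 w)] = [set w | near_pairs (w, X0 w)].
  by apply/seteqP; split => w [i]; exists i.
rewrite (graph_law_product X0_measurable G_measurable G_setI G_setT X0_indep
  near_pairs_sigma).
by apply: eq_integral => w _; rewrite /= xsection_near_pairs.
Qed.

Lemma integrable_measure_union_balls : P.-integrable setT (fun w => p (U w)).
Proof.
apply/integrableP; split; first exact: measurable_measure_union_balls.
have int1_lty : (\int[P]_w (cst 1 w) < +oo)%E.
  by rewrite integral_cst // mul1e; exact: fin_num_fun_lty.
apply: le_lt_trans int1_lty; apply: ge0_le_integral => //.
  exact: measurableT_comp measurable_measure_union_balls.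
by move=> w _; rewrite gee0_abs ?measure_ge0 ?probability_le1.
Qed.

End union_balls.

Unset Implicit Arguments.

Theorem lemma3p11 (R : realType) (dS : measure_display) (S : measurableType dS)
  (d : S -> S -> R)
  (Hmetric : is_metric d)
  (Hborel : (@measurable _ S) = <<s d_open d >>)
  (Hcomplete : d_complete d) (Hsep : d_separable d)
  (p : probability S R)
  (eps : R) (Heps : 0 < eps) (k : nat)
  (dO : measure_display) (O : measurableType dO) (P : probability O R)
  (X0 : O -> S) (X : 'I_k -> O -> S)
  (HX0m : measurable_fun setT X0) (HXm : forall i, measurable_fun setT (X i))
  (Hindep : mutual_indep P (extfam X0 X))
  (Hlaw : forall o A, measurable A -> P (extfam X0 X o @^-1` A) = p A)
  (C : 'I_k -> O -> set S)
  (HCm : forall i w, measurable (C i w))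
  (HCdisj : forall i j w, i != j -> C i w `&` C j w = set0)
  (HCsub : forall i w, C i w `<=` dball d (X i w) eps)
  (HCcov : forall w, \bigcup_(i in [set: 'I_k]) C i w
                     = \bigcup_(i in [set: 'I_k]) dball d (X i w) eps) :
  let pek := P [set w | exists i, dball d (X i w) eps (X0 w)] in
  (\int[P]_w dBL d p (pke p (fun i => X i w) (fun i => C i w))
     <= eps%:E * pek + 2%:E * (1 - pek))%E.
Proof.
cbv zeta; set pek := P [set w | _].
pose Z w := \sum_(i < k) fine (p (C i w)).
have Cw_measurable w i := HCm i w.
have Cw_disj w i j := HCdisj i j w.
have pUE w : p (\bigcup_(i in [set: 'I_k]) dball d (X i w) eps) = (Z w)%:E.
  by rewrite -HCcov bigcup_setT_bigsetU -(cells_mass p (Cw_measurable w) (Cw_disj w)).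
have dBL_le w : (dBL d p (pke p (X^~ w) (C^~ w)) <= ((eps - 2) * Z w + 2)%:E)%E.
  apply: le_trans (dBL_pke_le Hmetric Hborel p (Cw_measurable w) (Cw_disj w)
    (HCsub^~ w)) _.
  by rewrite lee_fin /Z; lra.
apply: le_trans (ge0_le_integral_nonmeasurable P (fun w => dBL_ge0 _ _ _) dBL_le) _.
have Z_int : P.-integrable setT (EFin \o Z).
  have := integrable_measure_union_balls Hmetric Hborel Hsep P p eps HXm.
  by apply: eq_integrable => // w _; rewrite pUE.
have pekE : pek = (\int[P]_w (Z w)%:E)%E.
  rewrite /pek -(integral_measure_union_balls Hmetric Hborel Hsep eps HX0m HXm Hindep
    (Hlaw None)).
  by apply: eq_integral => w _; rewrite pUE.
rewrite integral_affine_probability // -pekE.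
have pek_fin : pek \is a fin_num by rewrite pekE integrable_fin_num.
rewrite -(fineK pek_fin); set q := fine pek.
change (((eps - 2) * q + 2)%:E <= (eps * q + 2 * (1 - q))%:E)%E.
by rewrite lee_fin; lra.
Qed.
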